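(* Let $p,q,r$ be distinct primes. Suppose $S$ is a numerical semigroup which is cyclotomic of depth $pqr$ and height $1$. Then $S$ is one of $\langle pr,q\rangle$, $\langle qp,r\rangle$, $\langle rq,p\rangle$.
   Context: A numerical semigroup is a submonoid $S$ of $(\mathbb N,+)$ with $\mathbb N\setminus S$ finite; $\langle a,b\rangle$ denotes the submonoid generated by $a,b$. $\mathrm P_S(x)=(1-x)\sum_{s\in S}x^s$. $S$ is cyclotomic if $\mathrm P_S$ has all complex roots in the closed unit disc. $S$ is cyclotomic of depth $d$ and height $h$ if $\mathrm P_S(x)\mid (x^d-1)^h$ with $d,h$ chosen minimally, that is, $\mathrm P_S(x)$ does not divide $(x^n-1)^{h-1}$ for any $n$, and does not divide $(x^{d'}-1)^h$ for any divisor $d'<d$ of $d$. *)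

From HB Require Import structures.
From mathcomp Require Import all_boot all_order all_algebra.
Set Implicit Arguments. Unset Strict Implicit. Unset Printing Implicit Defensive.
Import Order.TTheory GRing.Theory Num.Theory.

Definition numerical_semigroup (S : pred nat) : Prop :=
  [/\ 0 \in S,
      (forall a b, a \in S -> b \in S -> a + b \in S)
    & exists N, forall n, N <= n -> n \in S].

Definition gen2 (a b : nat) : pred nat :=
  fun n => [exists i : 'I_n.+1, exists j : 'I_n.+1, n == i * a + j * b].

Local Open Scope ring_scope.

(* P_S(x) = (1-x) sum_{s in S} x^s, computed with a bound N such that every
   n >= N lies in S:  (1-x) sum_{s in S, s<N} x^s + (1-x) sum_{s>=N} x^s
   = (1-x) sum_{s in S, s<N} x^s + x^N.  (Independent of the choice of N.) *)
Definition semigroup_poly (S : pred nat) (N : nat) : {poly int} :=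
  (1 - 'X) * (\sum_(s < N | S s) 'X^s) + 'X^N.

Definition cyclotomic_depth_height (S : pred nat) (N d h : nat) : Prop :=
  let P := semigroup_poly S N in
  [/\ (0 < d)%N, (0 < h)%N,
      P %| ('X^d - 1) ^+ h,
      (forall n : nat, (0 < n)%N -> ~~ (P %| ('X^n - 1) ^+ h.-1))
    & (forall d' : nat, (d' %| d)%N -> (d' < d)%N -> ~~ (P %| ('X^d' - 1) ^+ h))].

(* Since x^(pqr) - 1 is separable and each cyclotomic polynomial is irreducible
   over Q, the divisor P_S of x^(pqr) - 1 is a product of distinct Phi_d, d | pqr.
   As P_S(1) = 1, neither Phi_1 (which vanishes at 1) nor Phi_l for a prime l
   (for which Phi_l(1) = l) occurs.  Height 1 forces 1 \notin S, so the
   coefficient of x in P_S is -1; in Phi_pqr it is +1 and in each Phi_lm it is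
   -1.  Hence P_S is either a single Phi_lm, excluded by the depth being pqr, or
   Phi_pqr times two of the Phi_lm.  In the latter case, say
   P_S = Phi_pr Phi_qr Phi_pqr, one gets
   P_S (x^(pq) - 1) (x^r - 1) = (x - 1) (x^(pqr) - 1).  Writing h for the
   indicator of S, this says h(k) - h(k-pq) - h(k-r) + h(k-pq-r) equals 1 at
   k = 0, -1 at k = pqr and 0 elsewhere, and S = <pq, r> follows by induction
   on k. *)

From mathcomp Require Import all_boot all_order all_algebra all_field.
From mathcomp Require Import zify ring.
Set Implicit Arguments. Unset Strict Implicit. Unset Printing Implicit Defensive.
Import Order.TTheory GRing.Theory Num.Theory.

Lemma gen2P a b n : 0 < a -> 0 < b ->
  reflect (exists i j, n = i * a + j * b) (n \in gen2 a b).
Proof.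
move=> a_gt0 b_gt0; rewrite unfold_in /gen2; apply: (iffP existsP).
  by case=> i /existsP [j /eqP ->]; exists i, j.
case=> i [j Dn].
have ltin : i < n.+1.
  by rewrite ltnS Dn; apply: leq_trans (leq_addr _ _); rewrite leq_pmulr.
have ltjn : j < n.+1.
  by rewrite ltnS Dn; apply: leq_trans (leq_addl _ _); rewrite leq_pmulr.
by exists (Ordinal ltin); apply/existsP; exists (Ordinal ltjn); apply/eqP.
Qed.

Lemma semigroup_lin_mem (S : pred nat) a b i j : numerical_semigroup S ->
  a \in S -> b \in S -> i * a + j * b \in S.
Proof.
case=> S0 SD _ Sa Sb.
have mulS c k : c \in S -> k * c \in S.
  by move=> Sc; elim: k => // k IHk; rewrite mulSn SD.
by rewrite SD ?mulS.
Qed.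

Section IndicatorSeries.
Local Open Scope ring_scope.

(* For f the coefficient sequence of a series F, diffz f and shiftz f s are
   those of (1 - x) F and x^s F. *)
Definition indz (T : pred nat) k : int := (k \in T)%:R.
Definition diffz (f : nat -> int) k : int := f k - (if k is k'.+1 then f k' else 0).
Definition shiftz (f : nat -> int) s k : int := if (k < s)%N then 0 else f (k - s)%N.

Lemma diffzD f g k : diffz (fun i => f i + g i) k = diffz f k + diffz g k.
Proof. by case: k => [|k]; rewrite /diffz /=; ring. Qed.

Lemma diffzB f g k : diffz (fun i => f i - g i) k = diffz f k - diffz g k.
Proof. by case: k => [|k]; rewrite /diffz /=; ring. Qed.

Lemma diffz_shiftz f s k :
  diffz (shiftz f s) k = if (k < s)%N then 0 else diffz f (k - s).
Proof.
rewrite /diffz /shiftz; case: (ltnP k s) => [ltks | leks].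
  by case: k ltks => [|k] ltks /=; rewrite ?(ltnW ltks) subrr.
case: k leks => [|k] leks /=; first by rewrite subr0.
case: (ltnP k s) => [ltks | leks'].
  by have -> : (k.+1 - s = 0)%N by lia.
by rewrite subSn.
Qed.

Lemma eq_diffz f g : diffz f =1 diffz g -> f =1 g.
Proof.
move=> Dfg; elim=> [|k IHk]; first by have := Dfg 0%N; rewrite /diffz !subr0.
by have := Dfg k.+1; rewrite /diffz IHk => /addIr.
Qed.

Lemma shiftz_indz (T : pred nat) s k :
  shiftz (indz T) s k = ((s <= k)%N && ((k - s)%N \in T))%:R.
Proof. by rewrite /shiftz /indz ltnNge; case: (s <= k)%N. Qed.

Lemma coef_sum_Xn_mem (T : pred nat) N m :
  (\sum_(s < N | T s) 'X^s : {poly int})`_m = ((m < N)%N && (m \in T))%:R.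
Proof.
rewrite coef_sum; under eq_bigr do rewrite coefXn.
case: ltnP => /= [ltmN | leNm]; last first.
  by rewrite big1 // => i _; rewrite gtn_eqF // (leq_trans (ltn_ord i)).
case Tm: (m \in T); last first.
  by rewrite big1 // => i Ti; case: eqP => // Dm; rewrite -topredE /= Dm Ti in Tm.
rewrite (bigD1 (Ordinal ltmN)) //= eqxx big1 ?addr0 // => i /andP [_ ne].
by case: eqP => // Dm; case/eqP: ne; apply: val_inj.
Qed.

Section SemigroupPoly.
Variables (S : pred nat) (N : nat).
Hypotheses (S0 : 0%N \in S) (S_ge : forall n, (N <= n)%N -> n \in S).

Lemma coef_semigroup_poly k : (semigroup_poly S N)`_k = diffz (indz S) k.
Proof.
rewrite /semigroup_poly coefD coefXn mulrBl mul1r coefB coefXM !coef_sum_Xn_mem.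
rewrite /diffz /indz; case: (ltngtP k N) => [ltkN | ltNk | ->].
- case: k ltkN => [|k] ltkN /=; first by rewrite S0 subr0 addr0.
  by rewrite (ltnW ltkN) /= addr0.
- rewrite S_ge ?(ltnW ltNk) //; case: k ltNk => [|k] //= leNk.
  by rewrite -ltnS ltnNge leNk S_ge // addr0 subrr.
- rewrite S_ge //; case: (posnP N) => [-> | N_gt0]; first by rewrite /= subr0 add0r.
  by rewrite -(prednK N_gt0) /= ltnSn /= add0r addrC.
Qed.

Lemma coef_semigroup_polyMXn s k :
  (semigroup_poly S N * 'X^s)`_k = diffz (shiftz (indz S) s) k.
Proof. by rewrite coefMXn diffz_shiftz coef_semigroup_poly. Qed.

Lemma indz_recurrence a b :
    semigroup_poly S N * ('X^a - 1) * ('X^b - 1) = ('X - 1) * ('X^(a * b) - 1) ->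
  forall k, indz S k - shiftz (indz S) a k - shiftz (indz S) b k
              + shiftz (indz S) (a + b) k = (k == 0%N)%:R - (k == a * b)%:R.
Proof.
set P := semigroup_poly S N => EP.
have {}EP : P - P * 'X^a - P * 'X^b + P * 'X^(a + b) =
            1 - 'X - 'X^(a * b) + 'X^((a * b).+1).
  transitivity (P * ('X^a - 1) * ('X^b - 1)); first by rewrite exprD; ring.
  by rewrite EP exprS; ring.
have coefP k : P`_k = diffz (indz S) k := coef_semigroup_poly k.
have coefPX s k : (P * 'X^s)`_k = diffz (shiftz (indz S) s) k.
  exact: coef_semigroup_polyMXn.
clearbody P; apply: eq_diffz => k; have := congr1 (coefp k) EP.
rewrite /= !coefD !coefN !coefPX coefP !coefXn coefX coef1 diffzD !diffzB => ->.
by case: k => [|k]; rewrite /diffz /= ?eqSS; ring.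
Qed.
End SemigroupPoly.

Lemma eq_gen2_of_indz_recurrence (S : pred nat) a b :
    numerical_semigroup S -> (1 < a)%N -> (1 < b)%N ->
    (forall k, indz S k - shiftz (indz S) a k - shiftz (indz S) b k
                 + shiftz (indz S) (a + b) k = (k == 0%N)%:R - (k == a * b)%:R) ->
  S =i gen2 a b.
Proof.
move=> nsS a_gt1 b_gt1 rec.
have [a_gt0 b_gt0] : (0 < a)%N /\ (0 < b)%N by split; lia.
have [S0 _ _] := nsS.
have Sgen k : k = a \/ k = b -> k \in S.
  move=> Dk; have := rec k; rewrite /indz /shiftz.
  have [-> ->] : k == 0%N = false /\ k == (a * b)%N = false by split; apply/negbTE; nia.
  have -> : (k < a + b)%N by lia.
  case: Dk => ->; rewrite ltnn subnn S0; case: (_ \in S) => //;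
    case: ifP => _; last case: (_ \in S); lia.
move=> k; apply/idP/idP; last first.
  case/(gen2P _ a_gt0 b_gt0) => i [j ->].
  by apply: semigroup_lin_mem; rewrite // Sgen; auto.
elim/ltn_ind: k => k IHk Sk.
have [->|k_neq0] := eqVneq k 0%N; first by apply/gen2P => //; exists 0%N, 0%N.
have [->|k_neqab] := eqVneq k (a * b)%N.
  by apply/gen2P => //; exists b, 0%N; rewrite mulnC addn0.
have gen2_sub s : s = a \/ s = b -> (s <= k)%N -> (k - s)%N \in S -> k \in gen2 a b.
  move=> Ds lesk Sks.
  have /(gen2P _ a_gt0 b_gt0) [i [j Dks]] : (k - s)%N \in gen2 a b.
    by apply: IHk Sks; case: Ds; lia.
  by apply/(gen2P _ a_gt0 b_gt0); case: Ds => Ds; [exists i.+1, j | exists i, j.+1]; lia.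
have := rec k; rewrite !shiftz_indz /indz Sk (negPf k_neq0) (negPf k_neqab).
case: (boolP ((a <= k)%N && _)) => [/andP [leak Ska] _ | _].
  exact: gen2_sub (or_introl erefl) leak Ska.
case: (boolP ((b <= k)%N && _)) => [/andP [lebk Skb] _ | _].
  exact: gen2_sub (or_intror erefl) lebk Skb.
by case: (_ && _); lia.
Qed.
End IndicatorSeries.

Lemma eq_gen2_semigroup_poly (S : pred nat) N a b :
    numerical_semigroup S -> (forall n, N <= n -> n \in S) -> 1 < a -> 1 < b ->
    (semigroup_poly S N * ('X^a - 1) * ('X^b - 1) = ('X - 1) * ('X^(a * b) - 1))%R ->
  S =i gen2 a b.
Proof.
move=> nsS S_ge a_gt1 b_gt1 EP; apply: eq_gen2_of_indz_recurrence => //.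
by case: nsS => S0 _ _; apply: indz_recurrence EP.
Qed.

Lemma perm_divisors_prime_mul p m : prime p -> 0 < m -> ~~ (p %| m) ->
  perm_eq (divisors (p * m)) (divisors m ++ map (muln p) (divisors m)).
Proof.
move=> p_pr m_gt0 pNdvd_m; have p_gt0 := prime_gt0 p_pr.
apply: uniq_perm.
- exact: divisors_uniq.
- rewrite cat_uniq divisors_uniq (map_inj_uniq (f := muln p)) ?divisors_uniq ?andbT /=.
    apply/hasPn => _ /mapP [d d_m ->]; rewrite -dvdn_divisors //.
    by apply: contra pNdvd_m => /(dvdn_trans (dvdn_mulr d (dvdnn p))).
  by move=> x y /eqP; rewrite eqn_pmul2l // => /eqP.
move=> d; rewrite mem_cat -!dvdn_divisors ?muln_gt0 ?p_gt0 //; apply/idP/orP.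
- move=> d_pm; case p_d: (p %| d).
    right; apply/mapP; exists (d %/ p); last by rewrite mulnC divnK.
    by rewrite -dvdn_divisors // -(dvdn_pmul2l p_gt0) mulnC divnK.
  by left; rewrite -(Gauss_dvdr _ (n := p)) // coprime_sym prime_coprime // p_d.
- case=> [d_m | /mapP [e e_m ->]]; first exact: dvdn_mull.
  by rewrite dvdn_pmul2l // dvdn_divisors.
Qed.

Section ProdDivisors.
Local Open Scope ring_scope.
Variable R : comNzRingType.
Implicit Type F : nat -> R.

Lemma prod_divisors_prime_mul F p m : prime p -> (0 < m)%N -> ~~ (p %| m)%N ->
  \prod_(d <- divisors (p * m)) F d =
  (\prod_(d <- divisors m) F d) * \prod_(d <- divisors m) F (p * d)%N.
Proof.
move=> p_pr m_gt0 pNdvd_m.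
by rewrite (perm_big _ (perm_divisors_prime_mul p_pr m_gt0 pNdvd_m)) big_cat big_map.
Qed.

Lemma prod_divisors_prime F x : prime x -> \prod_(d <- divisors x) F d = F 1%N * F x.
Proof.
move=> x_pr; have xNdvd1 : ~~ (x %| 1)%N by rewrite dvdn1 neq_ltn prime_gt1 ?orbT.
have := prod_divisors_prime_mul F x_pr (isT : (0 < 1)%N) xNdvd1.
by rewrite muln1 => ->; rewrite !big_seq1 muln1.
Qed.

Lemma prod_divisors_prime2 F x y : prime x -> prime y -> x != y ->
  \prod_(d <- divisors (x * y)) F d = F 1%N * F x * F y * F (x * y)%N.
Proof.
move=> x_pr y_pr neq_xy.
rewrite prod_divisors_prime_mul ?prime_gt0 ?dvdn_prime2 // !prod_divisors_prime // muln1.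
by ring.
Qed.

Lemma prod_divisors_prime3 F x y z : prime x -> prime y -> prime z ->
    x != y -> y != z -> x != z ->
  \prod_(d <- divisors (x * y * z)) F d =
  F 1%N * F x * F y * F z * F (x * y)%N * F (x * z)%N * F (y * z)%N * F (x * y * z)%N.
Proof.
move=> x_pr y_pr z_pr neq_xy neq_yz neq_xz.
rewrite -mulnA prod_divisors_prime_mul ?muln_gt0 ?prime_gt0 //; last first.
  by rewrite Euclid_dvdM // !dvdn_prime2 // (negPf neq_xy) (negPf neq_xz).
by rewrite !prod_divisors_prime2 // !muln1 !mulnA; ring.
Qed.
End ProdDivisors.

Section Coef01.
Local Open Scope ring_scope.
Variable R : nzRingType.
Implicit Types (f g : {poly R}) (a b : R).

Definition coef01 f a := f`_0 = 1 /\ f`_1 = a.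

Lemma coef1M f g : (f * g)`_1 = f`_0 * g`_1 + f`_1 * g`_0.
Proof. by rewrite coefM big_ord_recr big_ord1. Qed.

Lemma coef01M f g a b : coef01 f a -> coef01 g b -> coef01 (f * g) (a + b).
Proof.
by case=> f0 f1 [g0 g1]; rewrite /coef01 coef0M coef1M f0 f1 g0 g1 !mul1r mulr1 addrC.
Qed.

Lemma coef01X f a n : coef01 f a -> coef01 (f ^+ n) (a *+ n).
Proof.
move=> fa; elim: n => [|n IHn]; first by rewrite /coef01 expr0 !coef1 mulr0n.
by rewrite exprS mulrS; apply: coef01M.
Qed.

Lemma coef01_mulKl f g a c : coef01 f a -> coef01 (f * g) c -> coef01 g (c - a).
Proof.
case=> f0 f1 [fg0 fg1]; move: fg0 fg1; rewrite coef0M coef1M f0 f1 !mul1r => g0.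
by rewrite g0 mulr1 => <-; split; rewrite // addrK.
Qed.

Lemma coef01_geom n : (1 < n)%N -> coef01 (\sum_(i < n) 'X^i) 1.
Proof.
case: n => [|[|n]] // _; rewrite /coef01 !coef_sum.
by split; rewrite !big_ord_recl big1 ?coefXn /= ?addr0 ?add0r // => i _; rewrite coefXn.
Qed.
End Coef01.

Lemma absz_prod_eq1 (I : eqType) (s : seq I) (F : I -> int) :
  `|(\prod_(i <- s) F i)%R|%N = 1%N -> forall i, i \in s -> `|F i|%N = 1%N.
Proof.
elim: s => [|j s IHs] //; rewrite big_cons abszM => /eqP; rewrite muln_eq1.
by case/andP => /eqP Fj1 /eqP /IHs Fs1 i; rewrite inE => /orP [/eqP -> | /Fs1].
Qed.

Section CyclotomicPrimes.
Local Open Scope ring_scope.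
Implicit Types (x y z : nat).

Lemma Cyclotomic1 : 'Phi_1 = 'X - 1.
Proof. by have := prod_Cyclotomic (isT : (0 < 1)%N); rewrite big_seq1 expr1. Qed.

Lemma coef0_Cyclotomic n : (1 < n)%N -> ('Phi_n)`_0 = 1.
Proof.
elim/ltn_ind: n => n IHn n_gt1; have n_gt0 := ltnW n_gt1.
have := congr1 (coefp 0) (prod_Cyclotomic n_gt0).
rewrite /= coef0_prod coefB coefXn coef1 eq_sym (gtn_eqF n_gt0) sub0r.
have mem_div d : (d %| n)%N -> d \in divisors n by rewrite -dvdn_divisors.
rewrite (bigD1_seq 1%N) ?mem_div ?dvd1n ?divisors_uniq //= Cyclotomic1.
rewrite coefB coefX coef1 sub0r -big_filter (bigD1_seq n) ?mem_filter ?(gtn_eqF n_gt1);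
  rewrite ?mem_div ?filter_uniq ?divisors_uniq //=.
rewrite big1_seq; first by rewrite mulr1 mulN1r => /oppr_inj.
move=> d /andP [d_neqn]; rewrite mem_filter -dvdn_divisors // => /andP [d_neq1 d_n].
apply: IHn; first by rewrite ltn_neqAle d_neqn dvdn_leq.
by rewrite ltn_neqAle eq_sym d_neq1 (dvdn_gt0 n_gt0).
Qed.

Lemma Xn_sub1_prime x : prime x -> 'X^x - 1 = 'Phi_1 * 'Phi_x.
Proof. by move=> x_pr; rewrite -prod_Cyclotomic ?prime_gt0 // prod_divisors_prime. Qed.

Lemma Xn_sub1_prime2 x y : prime x -> prime y -> x != y ->
  'X^(x * y) - 1 = 'Phi_1 * ('Phi_x * 'Phi_y * 'Phi_(x * y)).
Proof.
by move=> *; rewrite -prod_Cyclotomic ?muln_gt0 ?prime_gt0 // prod_divisors_prime2 // !mulrA.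
Qed.

Lemma Xn_sub1_prime3 x y z : prime x -> prime y -> prime z ->
    x != y -> y != z -> x != z ->
  'X^(x * y * z) - 1 = 'Phi_1 * ('Phi_x * 'Phi_y * 'Phi_z
    * 'Phi_(x * y) * 'Phi_(x * z) * 'Phi_(y * z) * 'Phi_(x * y * z)).
Proof.
by move=> *; rewrite -prod_Cyclotomic ?muln_gt0 ?prime_gt0 // prod_divisors_prime3 // !mulrA.
Qed.

Lemma Cyclotomic_dvdp_Xn_sub1 d n : (0 < n)%N -> (d %| n)%N -> 'Phi_d %| 'X^n - 1.
Proof.
by move=> n_gt0 d_dvd; rewrite -prod_Cyclotomic // (big_rem d) ?dvdp_mulIl // -dvdn_divisors.
Qed.

Lemma Cyclotomic1_cofactor n (Q : {poly int}) :
  'X^n - 1 = 'Phi_1 * Q -> Q = \sum_(i < n) 'X^i.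
Proof.
by rewrite subrX1 Cyclotomic1 => /mulfI <- //; rewrite -polyC1 polyXsubC_eq0.
Qed.

Lemma Cyclotomic_prime x : prime x -> 'Phi_x = \sum_(i < x) 'X^i.
Proof. by move=> x_pr; apply: Cyclotomic1_cofactor; rewrite Xn_sub1_prime. Qed.

Lemma Cyclotomic_prime_at1 x : prime x -> ('Phi_x).[1] = x%:R.
Proof.
move=> x_pr; rewrite Cyclotomic_prime // horner_sum.
by under eq_bigr do rewrite hornerXn expr1n; rewrite sumr_const card_ord.
Qed.

Lemma coef01_Cyclotomic_prime x : prime x -> coef01 'Phi_x 1.
Proof. by move=> x_pr; rewrite Cyclotomic_prime //; apply/coef01_geom/prime_gt1. Qed.

Lemma coef01_Cyclotomic_prime2 x y : prime x -> prime y -> x != y ->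
  coef01 'Phi_(x * y) (-1).
Proof.
move=> x_pr y_pr neq_xy; have [x_gt1 y_gt1] := (prime_gt1 x_pr, prime_gt1 y_pr).
have /(@coef01_geom int) : (1 < x * y)%N.
  by rewrite (leq_trans x_gt1) // leq_pmulr // prime_gt0.
rewrite -(Cyclotomic1_cofactor (Xn_sub1_prime2 x_pr y_pr neq_xy)).
move/(coef01_mulKl (coef01M (coef01_Cyclotomic_prime x_pr) (coef01_Cyclotomic_prime y_pr))).
by rewrite opprD addrA subrr sub0r.
Qed.

Lemma coef01_Cyclotomic_prime3 x y z : prime x -> prime y -> prime z ->
  x != y -> y != z -> x != z -> coef01 'Phi_(x * y * z) 1.
Proof.
move=> x_pr y_pr z_pr neq_xy neq_yz neq_xz.
have /(@coef01_geom int) : (1 < x * y * z)%N.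
  by rewrite (leq_trans (prime_gt1 x_pr)) // -mulnA leq_pmulr // muln_gt0 !prime_gt0.
rewrite -(Cyclotomic1_cofactor (Xn_sub1_prime3 x_pr y_pr z_pr neq_xy neq_yz neq_xz)).
have cx := coef01_Cyclotomic_prime x_pr; have cy := coef01_Cyclotomic_prime y_pr.
have cz := coef01_Cyclotomic_prime z_pr.
have cxy := coef01_Cyclotomic_prime2 x_pr y_pr neq_xy.
have cxz := coef01_Cyclotomic_prime2 x_pr z_pr neq_xz.
have cyz := coef01_Cyclotomic_prime2 y_pr z_pr neq_yz.
move/(coef01_mulKl (coef01M (coef01M (coef01M (coef01M (coef01M cx cy) cz) cxy) cxz) cyz)).
by rewrite !addrK subrr subr0.
Qed.

Lemma prod_Cyclotomic_at1_prime n (e : nat -> nat) x :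
    (0 < n)%N -> prime x -> (x %| n)%N ->
  `|(\prod_(d <- divisors n) 'Phi_d ^+ e d).[1]|%N = 1%N -> e x = 0%N.
Proof.
move=> n_gt0 x_pr x_dvd; rewrite horner_prod => /absz_prod_eq1 /(_ x).
rewrite -dvdn_divisors // horner_exp Cyclotomic_prime_at1 // abszX natz => /(_ x_dvd).
by case: (e x) => // k; rewrite expnS => /eqP; rewrite muln_eq1 gtn_eqF ?prime_gt1.
Qed.
End CyclotomicPrimes.

Section CyclotomicFactorization.
Local Open Scope ring_scope.
Local Notation intrp := (map_poly (intr : int -> algC)).

Lemma ratp_intp (P : {poly int}) :
  map_poly ratr (map_poly (intr : int -> rat) P) = intrp P.
Proof. by rewrite -map_poly_comp; apply: eq_map_poly => a /=; rewrite rmorph_int. Qed.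

(* Phi_d is the minimal polynomial over Q of each of its roots. *)
Lemma coprimep_Cyclotomic d (P : {poly int}) : (0 < d)%N ->
  ~~ (intrp 'Phi_d %| intrp P) -> coprimep (intrp 'Phi_d) (intrp P).
Proof.
move=> d_gt0 PhiNdvdP; apply: Pdiv.ClosedField.root_coprimep => w Phi_w.
apply: contra PhiNdvdP => /eqP Pw.
have [z z_prim] := C_prim_root_exists d_gt0.
have w_prim : d.-primitive_root w.
  by rewrite -(root_cyclotomic z_prim) -(Cintr_Cyclotomic z_prim).
have [m [Dm _] dvd_m] := minCpolyP w.
rewrite (Cintr_Cyclotomic w_prim) -(minCpoly_cyclotomic w_prim) Dm -ratp_intp dvdp_map.
by rewrite -dvd_m ratp_intp; apply/rootP.
Qed.

Lemma dvdp_prod_separable (s : seq nat) (G : nat -> {poly algC}) Q :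
  separable_poly (\prod_(i <- s) G i) -> (forall i, i \in s -> G i %| Q) ->
  \prod_(i <- s) G i %| Q.
Proof.
elim: s => [|i s IHs] sepG GQ; first by rewrite big_nil dvd1p.
move: sepG; rewrite big_cons separable_mul => /and3P [_ sepG coprimeG].
rewrite Gauss_dvdp // GQ ?mem_head // IHs // => j js.
by apply: GQ; rewrite inE js orbT.
Qed.

Lemma coprimep_prodr (s : seq nat) (G : nat -> {poly algC}) Q :
  (forall i, i \in s -> coprimep Q (G i)) -> coprimep Q (\prod_(i <- s) G i).
Proof.
elim: s => [|i s IHs] QG; first by rewrite big_nil coprimep1.
rewrite big_cons coprimepMr QG ?mem_head // IHs // => j js.
by apply: QG; rewrite inE js orbT.
Qed.

(* For P dividing x^n - 1, the exponent (0 or 1) of Phi_d in P. *)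
Definition Cyclotomic_dvdC (P : {poly int}) d : bool := intrp 'Phi_d %| intrp P.

Lemma eqp_prod_Cyclotomic n (P : {poly int}) : (0 < n)%N -> P %| 'X^n - 1 ->
  intrp P %= intrp (\prod_(d <- divisors n) 'Phi_d ^+ Cyclotomic_dvdC P d).
Proof.
move=> n_gt0 P_dvd; set b := Cyclotomic_dvdC P.
pose T := \prod_(d <- divisors n) 'Phi_d ^+ b d.
pose U := \prod_(d <- divisors n) 'Phi_d ^+ ~~ b d.
have intrpXn : intrp ('X^n - 1) = 'X^n - 1 by rewrite rmorphB rmorph1 /= map_polyXn.
have TU : intrp T * intrp U = 'X^n - 1.
  rewrite -rmorphM -big_split -intrpXn -prod_Cyclotomic //=.
  by congr intrp; apply: eq_bigr => d _; case: (b d); rewrite ?mulr1 ?mul1r.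
have : separable_poly ('X^n - 1 : {poly algC}).
  by apply: separable_Xn_sub_1; rewrite pnatr_eq0 -lt0n.
rewrite -TU separable_mul => /and3P [sepT _ _].
apply/andP; split.
  have coprimePU : coprimep (intrp P) (intrp U).
    rewrite rmorph_prod; apply: coprimep_prodr => d d_n; rewrite rmorphXn /=.
    case bd: (b d); first by rewrite expr0 coprimep1.
    rewrite expr1 coprimep_sym; apply: coprimep_Cyclotomic (negbT bd).
    by move: d_n; rewrite -dvdn_divisors // => /dvdn_gt0; apply.
  rewrite -(Gauss_dvdpl _ coprimePU) TU -intrpXn -!ratp_intp dvdp_map.
  by rewrite dvdp_rat_int.
move: sepT; rewrite /T !rmorph_prod => sepT; apply: dvdp_prod_separable => // d _.
by rewrite rmorphXn; case bd: (b d); rewrite ?expr0 ?dvd1p ?expr1.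
Qed.

Lemma intrp_eqp_eq (P Q : {poly int}) :
  intrp P %= intrp Q -> P`_0 = Q`_0 -> P`_0 != 0 -> P = Q.
Proof.
case/eqpP => -[c1 c2] /= /andP [c1_neq0 c2_neq0] EPQ DQ0 P0_neq0.
have Dc : c1 = c2.
  have := congr1 (coefp 0) EPQ; rewrite /= !coefZ !coef_map /= DQ0.
  by move/mulIf; apply; rewrite intr_eq0 -DQ0.
by apply: (map_inj_poly (@intr_inj algC)) => //; apply: (scalerI c1_neq0); rewrite EPQ Dc.
Qed.

Lemma Cyclotomic_dvdC1 (P : {poly int}) : Cyclotomic_dvdC P 1 = (P.[1] == 0).
Proof.
rewrite /Cyclotomic_dvdC Cyclotomic1 rmorphB /= map_polyX rmorph1 -polyC1 dvdp_XsubCl /root.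
by rewrite -(rmorph1 (intr : int -> algC)) horner_map intr_eq0.
Qed.

Lemma eq_prod_Cyclotomic n (P : {poly int}) : (0 < n)%N -> P %| 'X^n - 1 ->
    P`_0 = 1 -> P.[1] != 0 ->
  P = \prod_(d <- divisors n) 'Phi_d ^+ Cyclotomic_dvdC P d.
Proof.
move=> n_gt0 P_dvd P0 P1_neq0.
apply: intrp_eqp_eq (eqp_prod_Cyclotomic n_gt0 P_dvd) _ _; last by rewrite P0.
rewrite P0 -horner_coef0 horner_prod big1_seq // => d; rewrite -dvdn_divisors // => d_n.
rewrite horner_exp horner_coef0; have [->|d_neq1] := eqVneq d 1%N.
  by rewrite Cyclotomic_dvdC1 (negPf P1_neq0) expr0.
by rewrite coef0_Cyclotomic ?expr1n // ltn_neqAle eq_sym d_neq1 (dvdn_gt0 n_gt0).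
Qed.
End CyclotomicFactorization.

Section SemigroupPolyFactorization.
Local Open Scope ring_scope.

Lemma semigroup_poly_at1 (S : pred nat) N : (semigroup_poly S N).[1] = 1.
Proof. by rewrite /semigroup_poly hornerD hornerM hornerXn expr1n !hornerE. Qed.

Lemma coef0_semigroup_poly (S : pred nat) N : numerical_semigroup S ->
  (forall n, (N <= n)%N -> n \in S) -> (semigroup_poly S N)`_0 = 1.
Proof. by case=> S0 _ _ S_ge; rewrite coef_semigroup_poly // /diffz /indz S0 subr0. Qed.

Lemma coef01_semigroup_poly (S : pred nat) N : numerical_semigroup S ->
  (forall n, (N <= n)%N -> n \in S) -> 1%N \notin S -> coef01 (semigroup_poly S N) (-1).
Proof.
case=> S0 _ _ S_ge S1; rewrite /coef01 !coef_semigroup_poly // /diffz /indz.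
by rewrite S0 (negPf S1) subr0 sub0r.
Qed.

Lemma semigroup_poly_full (S : pred nat) N : numerical_semigroup S ->
  (forall n, (N <= n)%N -> n \in S) -> 1%N \in S -> semigroup_poly S N = 1.
Proof.
move=> nsS S_ge S1; have [S0 _ _] := nsS.
have S_all k : k \in S by have := semigroup_lin_mem k 0 nsS S1 S1; rewrite muln1 addn0.
apply/polyP => k; rewrite coef_semigroup_poly // coef1 /diffz /indz.
by case: k => [|k]; rewrite !S_all ?subr0 ?subrr.
Qed.

Lemma semigroup_poly_prime3_factor p q r (S : pred nat) N :
    prime p -> prime q -> prime r -> p != q -> q != r -> p != r ->
    numerical_semigroup S -> (forall n, (N <= n)%N -> n \in S) ->
    semigroup_poly S N %| 'X^(p * q * r) - 1 ->
  exists e1 e2 e3 e4 : bool, semigroup_poly S N =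
    'Phi_(p * q) ^+ e1 * 'Phi_(p * r) ^+ e2 * 'Phi_(q * r) ^+ e3 * 'Phi_(p * q * r) ^+ e4.
Proof.
move=> p_pr q_pr r_pr neq_pq neq_qr neq_pr nsS S_ge P_dvd.
have pqr_gt0 : (0 < p * q * r)%N by rewrite !muln_gt0 !prime_gt0.
set P := semigroup_poly S N in P_dvd *; have P1 : P.[1] = 1 := semigroup_poly_at1 S N.
have P1_neq0 : P.[1] != 0 by rewrite P1 oner_neq0.
have EPT := eq_prod_Cyclotomic pqr_gt0 P_dvd (coef0_semigroup_poly nsS S_ge) P1_neq0.
have no_prime x : prime x -> (x %| p * q * r)%N -> Cyclotomic_dvdC P x = false.
  move=> x_pr x_dvd; apply/negbTE/negP => Px.
  suff: Cyclotomic_dvdC P x = 0%N :> nat by rewrite Px.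
  apply: (prod_Cyclotomic_at1_prime (e := Cyclotomic_dvdC P)) pqr_gt0 x_pr x_dvd _.
  by rewrite -EPT P1.
rewrite EPT prod_divisors_prime3 // Cyclotomic_dvdC1 P1 /=.
rewrite (no_prime p) ?(no_prime q) ?(no_prime r) //; last 3 first.
- by rewrite dvdn_mull.
- by rewrite dvdn_mulr // dvdn_mull.
- by rewrite -mulnA dvdn_mulr.
by exists (Cyclotomic_dvdC P (p * q)), (Cyclotomic_dvdC P (p * r)),
  (Cyclotomic_dvdC P (q * r)), (Cyclotomic_dvdC P (p * q * r)); rewrite !expr0 !mul1r.
Qed.

Lemma one_notin_cyclotomic (S : pred nat) N n h : numerical_semigroup S ->
  (forall n, (N <= n)%N -> n \in S) -> cyclotomic_depth_height S N n h -> 1%N \notin S.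
Proof.
move=> nsS S_ge [_ _ _ P_ndvd _]; apply: contra (P_ndvd 1%N isT).
by move=> /(semigroup_poly_full nsS S_ge) ->; rewrite dvd1p.
Qed.

Lemma cyclotomic_depth1_neq_Cyclotomic (S : pred nat) N n d m :
    cyclotomic_depth_height S N n 1 -> (d * m = n)%N -> (1 < m)%N ->
  semigroup_poly S N <> 'Phi_d.
Proof.
move=> [n_gt0 _ _ _ P_depth] Ddm m_gt1 EP.
have d_dvd : (d %| n)%N by rewrite -Ddm dvdn_mulr.
have d_gt0 : (0 < d)%N by rewrite (dvdn_gt0 n_gt0 d_dvd).
move: (P_depth d d_dvd); rewrite -Ddm ltn_Pmulr // expr1 EP => /(_ isT) /negP; apply.
by apply: Cyclotomic_dvdp_Xn_sub1; rewrite ?muln_gt0 ?d_gt0 ?(ltnW m_gt1) ?dvdn_mulr.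
Qed.

Lemma semigroup_poly_prime3 p q r (S : pred nat) N :
    prime p -> prime q -> prime r -> p != q -> q != r -> p != r ->
    numerical_semigroup S -> (forall n, (N <= n)%N -> n \in S) ->
    cyclotomic_depth_height S N (p * q * r) 1 ->
  [\/ semigroup_poly S N = 'Phi_(p * q) * 'Phi_(q * r) * 'Phi_(p * q * r),
       semigroup_poly S N = 'Phi_(p * r) * 'Phi_(q * r) * 'Phi_(p * q * r)
     | semigroup_poly S N = 'Phi_(p * q) * 'Phi_(p * r) * 'Phi_(p * q * r)].
Proof.
move=> p_pr q_pr r_pr neq_pq neq_qr neq_pr nsS S_ge depth.
have [_ _ P_dvd _ _] := depth; rewrite expr1 in P_dvd.
have [e1 [e2 [e3 [e4 EP]]]] :=
  semigroup_poly_prime3_factor p_pr q_pr r_pr neq_pq neq_qr neq_pr nsS S_ge P_dvd.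
have [_ coef1_P] := coef01_semigroup_poly nsS S_ge (one_notin_cyclotomic nsS S_ge depth).
have [_] := coef01M (coef01M (coef01M
  (coef01X e1 (coef01_Cyclotomic_prime2 p_pr q_pr neq_pq))
  (coef01X e2 (coef01_Cyclotomic_prime2 p_pr r_pr neq_pr)))
  (coef01X e3 (coef01_Cyclotomic_prime2 q_pr r_pr neq_qr)))
  (coef01X e4 (coef01_Cyclotomic_prime3 p_pr q_pr r_pr neq_pq neq_qr neq_pr)).
rewrite -EP coef1_P => /eqP.
have neq_Phi := cyclotomic_depth1_neq_Cyclotomic depth.
(* Six exponent choices give -1; those leaving a single Phi_lm contradict the depth. *)
case: e1 e2 e3 e4 EP => [] [] [] [] EP // _; rewrite ?expr1 ?expr0 ?mulr1 ?mul1r in EP.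
- by constructor 3.
- by constructor 1.
- by case: (neq_Phi _ _ erefl (prime_gt1 r_pr)).
- by constructor 2.
- by case: (neq_Phi _ _ (mulnAC p r q) (prime_gt1 q_pr)).
- by case: (neq_Phi (q * r)%N p); rewrite ?prime_gt1 // mulnC mulnA.
Qed.
End SemigroupPolyFactorization.

Lemma eq_gen2_Cyclotomic_prime3 x y z (S : pred nat) N :
    prime x -> prime y -> prime z -> x != y -> y != z -> x != z ->
    numerical_semigroup S -> (forall n, N <= n -> n \in S) ->
    semigroup_poly S N = ('Phi_(x * z) * 'Phi_(y * z) * 'Phi_(x * y * z))%R ->
  S =i gen2 (x * y) z.
Proof.
move=> x_pr y_pr z_pr neq_xy neq_yz neq_xz nsS S_ge EP.
apply: (eq_gen2_semigroup_poly nsS S_ge _ (prime_gt1 z_pr)).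
  by rewrite (leq_trans (prime_gt1 x_pr)) // leq_pmulr // prime_gt0.
by rewrite EP Xn_sub1_prime3 // Xn_sub1_prime2 // Xn_sub1_prime // Cyclotomic1; ring.
Qed.

Theorem theorem2 (p q r : nat) (S : pred nat) (N : nat) :
  prime p -> prime q -> prime r -> p != q -> q != r -> p != r ->
  numerical_semigroup S ->
  (forall n, N <= n -> n \in S) ->
  cyclotomic_depth_height S N (p * q * r) 1 ->
  [\/ S =i gen2 (p * r) q, S =i gen2 (q * p) r | S =i gen2 (r * q) p].
Proof.
move=> p_pr q_pr r_pr neq_pq neq_qr neq_pr nsS S_ge depth.
have [neq_qp neq_rq neq_rp] : [/\ q != p, r != q & r != p] by split; rewrite eq_sym.
case: (semigroup_poly_prime3 p_pr q_pr r_pr neq_pq neq_qr neq_pr nsS S_ge depth) => EP.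
- apply/Or31/(eq_gen2_Cyclotomic_prime3 p_pr r_pr q_pr neq_pr neq_rq neq_pq nsS S_ge).
  by rewrite EP (mulnC r q) (mulnAC p r q).
- apply/Or32/(eq_gen2_Cyclotomic_prime3 q_pr p_pr r_pr neq_qp neq_pr neq_qr nsS S_ge).
  by rewrite EP (mulnC q p); ring.
- apply/Or33/(eq_gen2_Cyclotomic_prime3 r_pr q_pr p_pr neq_rq neq_qp neq_rp nsS S_ge).
  by rewrite EP (mulnC r p) (mulnC q p) (mulnC r q) [(q * r * p)%N]mulnC mulnA; ring.
Qed.
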